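(* Let $(X,d,\mu)$ be a coarse median space with parameters $\rho,H$. Then for every $n\geqslant1$ there exists a constant $D_n$ depending on $\rho,H$ (and $n$) such that for all $a,b,c,e_1,\ldots,e_n\in X$, $$\mu\big(a,b,\mu(e_1,\ldots,e_n;c)\big)\sim_{D_n}\mu\big(\mu(a,b,e_1),\ldots,\mu(a,b,e_n);\mu(a,b,c)\big).$$
   Context: Write $x\sim_s y$ if $d(x,y)\leqslant s$. A coarse median space is a triple $(X,d,\mu)$ with $(X,d)$ a metric space and $\mu\colon X^3\to X$ satisfying: (M1) $\mu(a,a,b)=a$; (M2) $\mu(a_1,a_2,a_3)$ is invariant under permutations of its arguments; (C1) there is an affine $\rho(t)=Kt+H_0$ with $d(\mu(a,b,c),\mu(a',b',c'))\leqslant\rho(d(a,a')+d(b,b')+d(c,c'))$ for all points; (C2) there is $H\colon\mathbb N\to[0,\infty)$ such that for every finite $A\subseteq X$ with $1\leqslant|A|\leqslant p$ there are a finite median algebra $(\Pi,\mu_\Pi)$ and maps $\pi\colon A\to\Pi$, $\lambda\colon\Pi\to X$ with $\lambda\mu_\Pi(x,y,z)\sim_{H(p)}\mu(\lambda x,\lambda y,\lambda z)$ for all $x,y,z\in\Pi$ and $\lambda\pi a\sim_{H(p)}a$ for all $a\in A$. Functions $\rho,H$ as in (C1),(C2) are called parameters. (A median algebra is a set with a ternary operation $m$ satisfying $m(a,a,b)=a$, full symmetry, and $m(m(a,b,c),b,d)=m(a,b,m(c,b,d))$.) The iterated coarse median is $\mu(x_1;b)=x_1$ and $\mu(x_1,\ldots,x_{k+1};b)=\mu(\mu(x_1,\ldots,x_k;b),x_{k+1},b)$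 for $k\geqslant1$. *)

From Stdlib Require Import Reals List.
Import ListNotations.
Open Scope R_scope.

Definition is_metric {X : Type} (d : X -> X -> R) : Prop :=
  (forall x y, 0 <= d x y) /\
  (forall x y, d x y = 0 <-> x = y) /\
  (forall x y, d x y = d y x) /\
  (forall x y z, d x z <= d x y + d y z).

Definition close {X : Type} (d : X -> X -> R) (s : R) (x y : X) : Prop :=
  d x y <= s.

Definition finite_type (P : Type) : Prop := exists l : list P, forall x, In x l.

Definition is_median_algebra {P : Type} (m : P -> P -> P -> P) : Prop :=
  (forall a b, m a a b = a) /\
  (forall a b c, m a b c = m b a c /\ m a b c = m a c b) /\
  (forall a b c d, m (m a b c) b d = m a b (m c b d)).

(* coarse median space with parameters rho(t) = K t + H0 and H *)
Definition is_coarse_median {X : Type} (d : X -> X -> R) (mu : X -> X -> X -> X)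
  (K H0 : R) (H : nat -> R) : Prop :=
  is_metric d /\
  (forall a b, mu a a b = a) /\
  (forall a b c, mu a b c = mu b a c /\ mu a b c = mu a c b) /\
  (forall a b c a' b' c',
              d (mu a b c) (mu a' b' c') <= K * (d a a' + d b b' + d c c') + H0) /\
  (forall p, 0 <= H p) /\
  (forall (p : nat) (A : list X),
              NoDup A -> (1 <= length A)%nat -> (length A <= p)%nat ->
              exists (P : Type) (m : P -> P -> P -> P),
                finite_type P /\ is_median_algebra m /\
                exists (pi : X -> P) (lam : P -> X),
                  (forall x y z, close d (H p) (lam (m x y z)) (mu (lam x) (lam y) (lam z))) /\
                  (forall a, In a A -> close d (H p) (lam (pi a)) a)).

(* iterated coarse median: mu(x1;b) = x1,
   mu(x1,...,x_{k+1};b) = mu(mu(x1,...,xk;b), x_{k+1}, b).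
   iter_mu mu x1 [x2;...;xk] b = mu(x1,...,xk;b). *)
Definition iter_mu {X : Type} (mu : X -> X -> X -> X) (x1 : X) (xs : list X) (b : X) : X :=
  fold_left (fun acc x => mu acc x b) xs x1.

(* By (C2), any five points of X are approximated by a finite median algebra,
   where the distributive law m(a,b,m(x,y,c)) = m(m(a,b,x),m(a,b,y),m(a,b,c))
   holds exactly; (C1) transports it back to X up to a constant.  The iterated
   statement then follows by induction on n, peeling off the last argument with
   one use of coarse distributivity and one use of (C1).

   Distributivity in a median algebra comes from the intervals
   [a,b] = {x | m(a,x,b) = x}: the gate property and the monotonicity of m for
   the order "x in [a,y]" show that m(m(a,b,x),m(a,b,y),m(a,b,c)) lies in
   [a,b], [a,t] and [b,t] with t = m(x,y,c), and the only such point is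
   m(a,b,t). *)

From Stdlib Require Import Reals Lra Lia List ClassicalEpsilon.
Import ListNotations.
Open Scope R_scope.

Section MedianAlgebra.

Variables (P : Type) (m : P -> P -> P -> P).
Hypothesis Hm : is_median_algebra m.

Lemma median_majority a b : m a a b = a.
Proof. apply Hm. Qed.

Lemma median_swap12 a b c : m a b c = m b a c.
Proof. apply Hm. Qed.

Lemma median_swap23 a b c : m a b c = m a c b.
Proof. apply Hm. Qed.

Lemma median_assoc a b c d : m (m a b c) b d = m a b (m c b d).
Proof. apply Hm. Qed.

(* Closes goals [m x y z = m x' y' z'] that hold up to permuting the arguments
   of [m], recursively in the subterms. *)
Ltac median_sym :=
  solve [ reflexivity
        | lazymatch goal with
          | |- m _ _ _ = m _ _ _ =>
              first [ apply f_equal3; median_sym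
                    | etransitivity; [apply median_swap12 |]; apply f_equal3; median_sym
                    | etransitivity; [apply median_swap23 |]; apply f_equal3; median_sym
                    | etransitivity; [apply median_swap12 |];
                      etransitivity; [apply median_swap23 |]; apply f_equal3; median_sym
                    | etransitivity; [apply median_swap23 |];
                      etransitivity; [apply median_swap12 |]; apply f_equal3; median_sym
                    | etransitivity; [apply median_swap12 |];
                      etransitivity; [apply median_swap23 |];
                      etransitivity; [apply median_swap12 |]; apply f_equal3; median_sym ]
          end ].

(* [between a x b]: [x] lies in the interval [[a, b]].  For fixed [a], the map
   [(x, y) |-> m a x y] is a semilattice operation by [median_assoc], and
   [between a x y] is its order. *)
Definition between (a x b : P) : Prop := m a x b = x.

Lemma between_refl a x : between a x x.
Proof. unfold between. rewrite median_swap12, median_swap23. apply median_majority. Qed.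

Lemma between_congr a x x' y y' : x = x' -> y = y' -> between a x y -> between a x' y'.
Proof. intros -> ->; trivial. Qed.

Lemma between_median a b c : between a (m a b c) b.
Proof.
  unfold between.
  transitivity (m (m c b a) b a); [median_sym |].
  rewrite median_assoc, (median_swap23 a b a), median_majority.
  median_sym.
Qed.

Lemma between_median_r a b c : between a (m a b c) c.
Proof.
  apply between_congr with (m a c b) c; [apply median_swap23 | reflexivity |].
  apply between_median.
Qed.

Lemma between_trans a u v w : between a u v -> between a v w -> between a u w.
Proof.
  unfold between; intros Huv Hvw.
  assert (Huv' : m u a v = u) by (rewrite <- Huv at 2; median_sym).
  assert (Hvw' : m v a w = v) by (rewrite <- Hvw at 2; median_sym).
  transitivity (m (m u a v) a w); [rewrite Huv'; median_sym |].
  rewrite median_assoc, Hvw'. exact Huv'.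
Qed.

(* The gate property: [m a b z] is the point of [[a, b]] nearest to [z]. *)
Lemma between_gate a b z w : between a w b -> between z (m a b z) w.
Proof.
  unfold between; intros Hw.
  set (g := m a b z).
  assert (Hg : m g z a = g).
  { pose proof (between_median a z b) as E; unfold between in E.
    unfold g. transitivity (m a (m a z b) z); [median_sym | rewrite E; median_sym]. }
  assert (Hag : m a g w = m a z w).
  { unfold g. transitivity (m (m w a b) a z).
    - rewrite median_assoc. median_sym.
    - rewrite (median_swap12 w a b), Hw. median_sym. }
  transitivity (m (m g z a) z w); [rewrite Hg; median_sym |].
  rewrite median_assoc, <- Hag.
  transitivity (m (m z g a) g w); [rewrite median_assoc; median_sym |].
  rewrite (median_swap12 z g a), Hg. apply median_majority.
Qed.

Lemma between_median_unique a b z p :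
  between a p b -> between a p z -> between b p z -> p = m a b z.
Proof.
  unfold between; intros Hb Hz Hbz.
  assert (Hp : m a p (m a b z) = p).
  { transitivity (m (m p a b) a z).
    - rewrite median_assoc. median_sym.
    - rewrite (median_swap12 p a b), Hb, (median_swap12 p a z), Hz. reflexivity. }
  pose proof (between_gate b z a p Hbz) as Hg; unfold between in Hg.
  rewrite <- Hp at 1.
  transitivity (m a (m b z a) p); [median_sym | rewrite Hg; median_sym].
Qed.

Lemma between_shift a u x p q :
  between a u x -> between u p q -> between x q p -> between a p q.
Proof.
  unfold between; intros Hu Hp Hq.
  pose proof (between_gate a x p u Hu) as Hr; unfold between in Hr.
  set (r := m a x p) in Hr.
  assert (Hr' : m r p u = r) by (rewrite <- Hr at 2; median_sym).
  transitivity (m a p (m x p q)); [rewrite <- Hq at 1; median_sym |].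
  rewrite <- median_assoc.
  transitivity (m (m r p u) p q); [rewrite Hr'; unfold r; median_sym |].
  rewrite median_assoc, Hp. apply between_refl.
Qed.

Lemma between_median_mono a u x y c :
  between a u x -> between a (m u y c) (m x y c).
Proof.
  intros Hu.
  apply (between_shift a u x); [exact Hu | |].
  - apply between_congr with (m y c u) (m x y c); [median_sym | reflexivity |].
    apply between_gate.
    apply between_congr with (m y c x) c; [median_sym | reflexivity | apply between_median].
  - apply between_congr with (m y c x) (m u y c); [median_sym | reflexivity |].
    apply between_gate.
    apply between_congr with (m y c u) c; [median_sym | reflexivity | apply between_median].
Qed.

Lemma between_median_mono3 a u v w u' v' w' :
  between a u u' -> between a v v' -> between a w w' -> between a (m u v w) (m u' v' w').
Proof.
  intros Hu Hv Hw.
  apply between_trans with (m u' v w); [now apply between_median_mono |].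
  apply between_trans with (m u' v' w).
  - apply between_congr with (m v w u') (m v' w u'); [median_sym | median_sym |].
    now apply between_median_mono.
  - apply between_congr with (m w u' v') (m w' u' v'); [median_sym | median_sym |].
    now apply between_median_mono.
Qed.

Lemma median_distr a b x y c :
  m a b (m x y c) = m (m a b x) (m a b y) (m a b c).
Proof.
  assert (Hswap : forall z, m b a z = m a b z) by (intro; apply median_swap12).
  assert (Hlow : forall a b, between a (m (m a b x) (m a b y) (m a b c)) (m x y c))
    by (intros; apply between_median_mono3; apply between_median_r).
  symmetry. apply between_median_unique.
  - apply between_congr with (m (m a b x) (m a b y) (m a b c)) (m b b (m a b c));
      [reflexivity | apply median_majority |].
    apply between_median_mono3; try apply between_median; apply between_refl.
  - apply Hlow.
  - rewrite <- !Hswap. apply Hlow.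
Qed.

End MedianAlgebra.

Definition coarse_step (K H0 h e : R) : R := Rabs K * e + H0 + h.

Definition distr_const (K H0 h : R) : R :=
  let e := coarse_step K H0 h (h + h + h) in
  coarse_step K H0 h (h + h + e) + coarse_step K H0 h (e + e + e).

Fixpoint iter_distr_const (K H0 : R) (H : nat -> R) (k : nat) : R :=
  match k with
  | O => 0
  | S k => distr_const K H0 (H 5%nat) + Rabs K * iter_distr_const K H0 H k + H0
  end.

Lemma iter_mu_snoc {X : Type} (mu : X -> X -> X -> X) x xs y b :
  iter_mu mu x (xs ++ [y]) b = mu (iter_mu mu x xs b) y b.
Proof. unfold iter_mu. now rewrite fold_left_app. Qed.

Section CoarseMedian.

Variables (X : Type) (d : X -> X -> R) (mu : X -> X -> X -> X) (K H0 : R) (H : nat -> R).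
Hypothesis HX : is_coarse_median d mu K H0 H.

Lemma dist_self x : d x x = 0.
Proof. apply (proj1 (proj2 (proj1 HX))). reflexivity. Qed.

Lemma dist_sym x y : d x y = d y x.
Proof. apply (proj1 (proj2 (proj2 (proj1 HX)))). Qed.

Lemma dist_triangle x y z : d x z <= d x y + d y z.
Proof. apply (proj2 (proj2 (proj2 (proj1 HX)))). Qed.

Lemma mu_lipschitz a b c a' b' c' :
  d (mu a b c) (mu a' b' c') <= Rabs K * (d a a' + d b b' + d c c') + H0.
Proof.
  destruct HX as [[Hd0 _] [_ [_ [HC1 _]]]].
  eapply Rle_trans; [apply HC1 |].
  apply Rplus_le_compat_r, Rmult_le_compat_r; [| apply Rle_abs].
  pose proof (Hd0 a a'); pose proof (Hd0 b b'); pose proof (Hd0 c c'); lra.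
Qed.

Lemma mu_near_median (P : Type) (m : P -> P -> P -> P) (lam : P -> X) (h : R) :
  (forall x y z, close d h (lam (m x y z)) (mu (lam x) (lam y) (lam z))) ->
  forall u1 u2 u3 w1 w2 w3 f1 f2 f3,
  d u1 (lam w1) <= f1 -> d u2 (lam w2) <= f2 -> d u3 (lam w3) <= f3 ->
  d (mu u1 u2 u3) (lam (m w1 w2 w3)) <= coarse_step K H0 h (f1 + f2 + f3).
Proof.
  intros Hlam u1 u2 u3 w1 w2 w3 f1 f2 f3 H1 H2 H3.
  unfold coarse_step.
  eapply Rle_trans; [apply (dist_triangle _ (mu (lam w1) (lam w2) (lam w3))) |].
  rewrite (dist_sym _ (lam _)).
  pose proof (Hlam w1 w2 w3) as Hh; unfold close in Hh.
  pose proof (mu_lipschitz u1 u2 u3 (lam w1) (lam w2) (lam w3)).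
  assert (Rabs K * (d u1 (lam w1) + d u2 (lam w2) + d u3 (lam w3)) <= Rabs K * (f1 + f2 + f3))
    by (apply Rmult_le_compat_l; [apply Rabs_pos | lra]).
  lra.
Qed.

Lemma mu_distr_coarse a b x y c :
  d (mu a b (mu x y c)) (mu (mu a b x) (mu a b y) (mu a b c)) <= distr_const K H0 (H 5%nat).
Proof.
  set (pts := [a; b; x; y; c]).
  set (A := nodup (fun u v => excluded_middle_informative (u = v)) pts).
  assert (HA : forall z, In z pts -> In z A) by (intros z; apply nodup_In).
  assert (Hlen : (length A <= length pts)%nat)
    by (apply (NoDup_incl_length (NoDup_nodup _ _)); intros z; apply nodup_In).
  assert (Hne : (1 <= length A)%nat)
    by (destruct A as [| z A']; [destruct (HA a); simpl; auto | simpl; lia]).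
  destruct HX as [_ [_ [_ [_ [_ HC2]]]]].
  destruct (HC2 5%nat A (NoDup_nodup _ _) Hne Hlen)
    as [P [m [_ [Hm [pi [lam [Hlam Hpi]]]]]]].
  set (h := H 5%nat) in *.
  assert (Hnear : forall z, In z pts -> d z (lam (pi z)) <= h)
    by (intros z Hz; rewrite dist_sym; apply Hpi, HA, Hz).
  assert (Ha : d a (lam (pi a)) <= h) by (apply Hnear; simpl; tauto).
  assert (Hb : d b (lam (pi b)) <= h) by (apply Hnear; simpl; tauto).
  assert (Hx : d x (lam (pi x)) <= h) by (apply Hnear; simpl; tauto).
  assert (Hy : d y (lam (pi y)) <= h) by (apply Hnear; simpl; tauto).
  assert (Hc : d c (lam (pi c)) <= h) by (apply Hnear; simpl; tauto).
  pose proof (mu_near_median P m lam h Hlam) as Hstep.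
  pose proof (Hstep _ _ _ _ _ _ _ _ _ Ha Hb (Hstep _ _ _ _ _ _ _ _ _ Hx Hy Hc)) as Hl.
  pose proof (Hstep _ _ _ _ _ _ _ _ _
                (Hstep _ _ _ _ _ _ _ _ _ Ha Hb Hx)
                (Hstep _ _ _ _ _ _ _ _ _ Ha Hb Hy)
                (Hstep _ _ _ _ _ _ _ _ _ Ha Hb Hc)) as Hr.
  rewrite <- (median_distr P m Hm) in Hr.
  eapply Rle_trans;
    [apply (dist_triangle _ (lam (m (pi a) (pi b) (m (pi x) (pi y) (pi c))))) |].
  rewrite (dist_sym (lam _)).
  unfold distr_const. apply Rplus_le_compat; [exact Hl | exact Hr].
Qed.

Lemma iter_mu_distr_coarse a b c e1 es :
  d (mu a b (iter_mu mu e1 es c))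
    (iter_mu mu (mu a b e1) (map (fun e => mu a b e) es) (mu a b c))
  <= iter_distr_const K H0 H (length es).
Proof.
  induction es as [| e es IH] using rev_ind.
  - simpl. rewrite dist_self. apply Rle_refl.
  - rewrite map_app, length_app, Nat.add_1_r. cbn [map iter_distr_const].
    rewrite !iter_mu_snoc.
    set (t := iter_mu mu e1 es c) in *.
    set (t' := iter_mu mu (mu a b e1) (map (fun e => mu a b e) es) (mu a b c)) in *.
    eapply Rle_trans; [apply (dist_triangle _ (mu (mu a b t) (mu a b e) (mu a b c))) |].
    pose proof (mu_distr_coarse a b t e c).
    pose proof (mu_lipschitz (mu a b t) (mu a b e) (mu a b c) t' (mu a b e) (mu a b c)) as Hl.
    rewrite !dist_self in Hl.
    assert (Rabs K * (d (mu a b t) t' + 0 + 0) <= Rabs K * iter_distr_const K H0 H (length es))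
      by (apply Rmult_le_compat_l; [apply Rabs_pos | lra]).
    lra.
Qed.

End CoarseMedian.

Theorem lemma2p19 :
  forall (K H0 : R) (H : nat -> R) (n : nat), (1 <= n)%nat ->
  exists Dn : R,
    forall (X : Type) (d : X -> X -> R) (mu : X -> X -> X -> X),
      is_coarse_median d mu K H0 H ->
      forall (a b c e1 : X) (es : list X), length (e1 :: es) = n ->
        close d Dn (mu a b (iter_mu mu e1 es c))
                   (iter_mu mu (mu a b e1) (map (fun e => mu a b e) es) (mu a b c)).
Proof.
  intros K H0 H n _.
  exists (iter_distr_const K H0 H (n - 1)).
  intros X d mu HX a b c e1 es Hlen.
  simpl in Hlen. subst n. rewrite Nat.sub_1_r. simpl.
  apply iter_mu_distr_coarse; exact HX.
Qed.
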